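(* For every $N$-partite pure state $\left|\psi\right\rangle\in\mathbb{C}^{d_1}\otimes\cdots\otimes\mathbb{C}^{d_N}$, $$E_{MB}(\left|\psi\right\rangle)\ \ge\ E_R(\left|\psi\right\rangle).$$ More precisely, if an adaptive local measurement scheme with product outcome vectors $|e_{\mathbf{i}}\rangle=|\phi^{(1)}_{i_1}\rangle\otimes\cdots\otimes|\phi^{(N)}_{i_N|i_1\dots i_{N-1}}\rangle$ has outcome distribution $\mathbf{p}$, then the fully separable state $\omega=\sum_{\mathbf{i}}p_{\mathbf{i}}|e_{\mathbf{i}}\rangle\langle e_{\mathbf{i}}|$ satisfies $-\langle\psi|\log_2\omega|\psi\rangle=H(\mathbf{p})$.
   Context: Entanglement measurement bound (EMB). Let $\left|\psi\right\rangle$ be a unit vector in $\mathcal{H}_1\otimes\cdots\otimes\mathcal{H}_N$, $\mathcal{H}_j=\mathbb{C}^{d_j}$. An adaptive local measurement scheme consists of: an ordering $\pi$ of the parties $\{1,\dots,N\}$; an orthonormal basis $\{|\phi^{(1)}_{i_1}\rangle\}_{i_1}$ of $\mathcal{H}_{\pi(1)}$; and, for each $k=2,\dots,N$ and each outcome history $(i_1,\dots,i_{k-1})$, an orthonormal basis $\{|\phi^{(k)}_{i_k|i_1\dots i_{k-1}}\rangle\}_{i_k}$ of $\mathcal{H}_{\pi(k)}$ (which may depend on the history). Its outcome distribution is $p_{i_1\dots i_N}=\big|\big(\langle\phi^{(1)}_{i_1}|\otimes\langle\phi^{(2)}_{i_2|i_1}|\otimes\cdots\otimes\langle\phi^{(N)}_{i_N|i_1\dots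 i_{N-1}}|\big)\left|\psi\right\rangle\big|^2$, where the $k$-th bra acts on the tensor factor of party $\pi(k)$. The EMB is $E_{MB}(\left|\psi\right\rangle)=\min H(\mathbf{p})$, where $H(\mathbf{p})=-\sum p_{i_1\dots i_N}\log_2 p_{i_1\dots i_N}$ is the Shannon entropy and the minimum is over all adaptive local measurement schemes (including all orderings of the parties). Relative entropy of entanglement: $E_R(\left|\psi\right\rangle)=\min_{\sigma}\big(-\langle\psi|\log_2\sigma|\psi\rangle\big)$, the minimum over all fully separable states $\sigma$ (convex combinations of $N$-fold product states $\sigma_1\otimes\cdots\otimes\sigma_N$), with the convention that the value is $+\infty$ if $\left|\psi\right\rangle\notin\mathrm{supp}\,\sigma$. *)

From Stdlib Require Export Reals List Permutation.
Export ListNotations.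
Open Scope R_scope.

Record C := mkC { Cre : R; Cim : R }.
Definition C0 : C := mkC 0 0.
Definition C1 : C := mkC 1 0.
Definition RtoC (r : R) : C := mkC r 0.
Definition Cadd (z w : C) : C := mkC (Cre z + Cre w) (Cim z + Cim w).
Definition Cmul (z w : C) : C :=
  mkC (Cre z * Cre w - Cim z * Cim w) (Cre z * Cim w + Cim z * Cre w).
Definition Cconj (z : C) : C := mkC (Cre z) (- Cim z).
Definition Cnorm2 (z : C) : R := Cre z * Cre z + Cim z * Cim z.

Definition Csum {A : Type} (l : list A) (f : A -> C) : C :=
  fold_right (fun a acc => Cadd (f a) acc) C0 l.
Definition Cprod {A : Type} (l : list A) (f : A -> C) : C :=
  fold_right (fun a acc => Cmul (f a) acc) C1 l.
Definition Rsum {A : Type} (l : list A) (f : A -> R) : R :=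
  fold_right (fun a acc => f a + acc) 0 l.

Fixpoint all_idx (ds : list nat) : list (list nat) :=
  match ds with
  | [] => [[]]
  | a :: ds' => flat_map (fun x => map (cons x) (all_idx ds')) (seq 0 a)
  end.

Definition log2 (x : R) : R := ln x / ln 2.

(* Shannon entropy  H(p) = - sum p log2 p   (0 log 0 = 0 since 0 * _ = 0) *)
Definition entropy {A : Type} (l : list A) (p : A -> R) : R :=
  - Rsum l (fun i => p i * log2 (p i)).

(* A vector is a function on multi-indices
   j = [j_1;...;j_N] with j_n < d_n (values elsewhere are irrelevant);
   the standard basis is the tensor product of the local standard bases. *)
Definition gvec := list nat -> C.
Definition gmat := list nat -> list nat -> C.

Definition ginner (ds : list nat) (u v : gvec) : C :=
  Csum (all_idx ds) (fun j => Cmul (Cconj (u j)) (v j)).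

Definition unit_vec (ds : list nat) (psi : gvec) : Prop := ginner ds psi psi = C1.

Definition linner (d : nat) (u v : nat -> C) : C :=
  Csum (seq 0 d) (fun x => Cmul (Cconj (u x)) (v x)).

Definition local_onb (d : nat) (b : nat -> nat -> C) : Prop :=
  forall a a', (a < d)%nat -> (a' < d)%nat ->
    linner d (b a) (b a') = if Nat.eqb a a' then C1 else C0.

(* ---------- adaptive local measurement schemes ----------
   perm = [pi(1); ...; pi(N)] (parties numbered 0..N-1),
   B h a = a-th vector of the orthonormal basis of H_{pi(k+1)} used at step
   k+1 after the outcome history h = [i_1;...;i_k]. *)
Definition dims_in_order (ds perm : list nat) : list nat :=
  map (fun n => nth n ds 0%nat) perm.

Definition is_scheme (ds perm : list nat) (B : list nat -> nat -> nat -> C) : Prop :=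
  Permutation perm (seq 0 (length ds)) /\
  forall (k : nat) (h : list nat), (k < length ds)%nat ->
    In h (all_idx (firstn k (dims_in_order ds perm))) ->
    local_onb (nth k (dims_in_order ds perm) 0%nat) (B h).

Definition outcomes (ds perm : list nat) : list (list nat) :=
  all_idx (dims_in_order ds perm).

(* |e_i> = |phi^(1)_{i_1}> (x) |phi^(2)_{i_2|i_1}> (x) ... , the k-th factor
   sitting in the tensor factor of party pi(k) *)
Definition outcome_vec (ds perm : list nat) (B : list nat -> nat -> nat -> C)
  (i : list nat) : gvec := fun j =>
  Cprod (seq 0 (length ds))
    (fun k => B (firstn k i) (nth k i 0%nat) (nth (nth k perm 0%nat) j 0%nat)).

Definition prob (ds perm : list nat) (B : list nat -> nat -> nat -> C)
  (psi : gvec) (i : list nat) : R :=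
  Cnorm2 (ginner ds (outcome_vec ds perm B i) psi).

Definition omega (ds perm : list nat) (B : list nat -> nat -> nat -> C)
  (psi : gvec) : gmat := fun j j' =>
  Csum (outcomes ds perm) (fun i =>
    Cmul (RtoC (prob ds perm B psi i))
         (Cmul (outcome_vec ds perm B i j) (Cconj (outcome_vec ds perm B i j')))).

Definition ldensity (d : nat) (rho : nat -> nat -> C) : Prop :=
  (forall x y, (x < d)%nat -> (y < d)%nat -> rho y x = Cconj (rho x y)) /\
  (forall v : nat -> C,
     0 <= Cre (linner d v (fun x => Csum (seq 0 d) (fun y => Cmul (rho x y) (v y))))) /\
  Csum (seq 0 d) (fun x => rho x x) = C1.

Definition fully_separable (ds : list nat) (sigma : gmat) : Prop :=
  exists (J : nat) (q : nat -> R) (rho : nat -> nat -> nat -> nat -> C),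
    (forall j, (j < J)%nat -> 0 <= q j) /\
    Rsum (seq 0 J) q = 1 /\
    (forall j n, (j < J)%nat -> (n < length ds)%nat ->
        ldensity (nth n ds 0%nat) (rho j n)) /\
    forall i i', In i (all_idx ds) -> In i' (all_idx ds) ->
      sigma i i' =
      Csum (seq 0 J) (fun j =>
        Cmul (RtoC (q j))
             (Cprod (seq 0 (length ds)) (fun n => rho j n (nth n i 0%nat) (nth n i' 0%nat)))).

(* ---------- -<psi| log2 sigma |psi> ----------
   neg_log_expect ds sigma psi v  <->  the value -<psi|log2 sigma|psi> is the
   finite real number v.  It is defined through a spectral decomposition
   sigma = sum_k lam_k |u_k><u_k| ({u_k} an orthonormal basis, lam_k >= 0):
   psi must lie in supp sigma (<u_k|psi> = 0 whenever lam_k = 0), and then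
   -<psi|log2 sigma|psi> = - sum_k |<u_k|psi>|^2 log2 lam_k.
   If psi is not in supp sigma, no v satisfies it (the value is +infinity). *)
Definition neg_log_expect (ds : list nat) (sigma : gmat) (psi : gvec) (v : R) : Prop :=
  exists (K : list (list nat)) (u : list nat -> gvec) (lam : list nat -> R),
    NoDup K /\ length K = length (all_idx ds) /\
    (forall k k', In k K -> In k' K ->
        ginner ds (u k) (u k') = if list_eq_dec Nat.eq_dec k k' then C1 else C0) /\
    (forall k, In k K -> 0 <= lam k) /\
    (forall i i', In i (all_idx ds) -> In i' (all_idx ds) ->
        sigma i i' = Csum K (fun k => Cmul (RtoC (lam k)) (Cmul (u k i) (Cconj (u k i'))))) /\
    (forall k, In k K -> lam k = 0 -> ginner ds (u k) psi = C0) /\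
    v = - Rsum K (fun k => Cnorm2 (ginner ds (u k) psi) * log2 (lam k)).

Definition EMB_value (ds : list nat) (psi : gvec) (x : R) : Prop :=
  exists perm B, is_scheme ds perm B /\
    x = entropy (outcomes ds perm) (prob ds perm B psi).

Definition ER_value (ds : list nat) (psi : gvec) (x : R) : Prop :=
  exists sigma, fully_separable ds sigma /\ neg_log_expect ds sigma psi x.

Definition is_min (P : R -> Prop) (m : R) : Prop := P m /\ forall x, P x -> m <= x.

(* Fix a pure N-partite state psi and an adaptive local measurement scheme.
   Its outcome vectors e_i = phi^(1)_{i_1} (x) phi^(2)_{i_2|i_1} (x) ... are
   product vectors and the outcome probabilities are p_i = |<e_i|psi>|^2.
   Everything rests on one observation: the e_i form an orthonormal basis of
   the global space.  Indeed <e_i|e_i'> factorises into local inner products,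
   and at the first step where i and i' differ both local vectors belong to
   the same basis (the histories agree), so that factor vanishes.  Hence
     - p is a probability distribution (Parseval in the basis e_i);
     - omega = sum_i p_i |e_i><e_i| is a convex combination of pure product
       states, hence fully separable;
     - that sum is a spectral decomposition of omega, psi lies in its support
       (p_i = 0 forces <e_i|psi> = 0), and -<psi|log2 omega|psi> = H(p).
   So every value of E_MB is a value of -<psi|log2 sigma|psi> for some fully
   separable sigma, and E_R <= E_MB follows. *)

From Stdlib Require Import Lra Lia.
From mathcomp Require ssreflect ssrfun ssrbool eqtype ssrnat fintype bigop ssralg matrix.
From mathcomp Require Rstruct complex.

Module SquareOrthonormal.
Import ssreflect ssrfun ssrbool eqtype ssrnat fintype bigop ssralg matrix.
Import Rstruct complex GRing.Theory.
Local Open Scope ring_scope.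

Definition toRi (z : C) : R[i] := Complex (Cre z) (Cim z).

Lemma toRi_inj z w : toRi z = toRi w -> z = w.
Proof. by case: z w => a b [c d] [-> ->]. Qed.

Lemma toRi_add z w : toRi (Cadd z w) = toRi z + toRi w.
Proof. by case: z w => a b [c d]. Qed.

Lemma toRi_mul z w : toRi (Cmul z w) = toRi z * toRi w.
Proof. by case: z w => a b [c d]. Qed.

Lemma toRi_sum (f : nat -> C) n :
  toRi (Csum (List.seq 0 n) f) = \sum_(i < n) toRi (f i).
Proof.
rewrite -(big_mkord xpredT (fun i => toRi (f i))) /index_iota subn0.
elim: n 0%N => [|n IH] m /=; first by rewrite big_nil.
by rewrite big_cons toRi_add IH.
Qed.

Lemma toRi_delta (a b : nat) : toRi (if Nat.eqb a b then C1 else C0) = (a == b)%:R.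
Proof. by case: (PeanoNat.Nat.eqb_spec a b) => [->|/eqP/negbTE ->]; rewrite ?eqxx. Qed.

(* If the n rows of an n x n complex matrix U are orthonormal (U U^* = 1),
   so are its columns (U^* U = 1): a one-sided inverse of a square matrix is
   two-sided. *)
Lemma square_orthonormal_complete (n : nat) (U : nat -> nat -> C) :
  (forall a b, lt a n -> lt b n ->
     Csum (List.seq 0 n) (fun x => Cmul (Cconj (U a x)) (U b x)) =
     if Nat.eqb a b then C1 else C0) ->
  forall x y, lt x n -> lt y n ->
     Csum (List.seq 0 n) (fun a => Cmul (U a x) (Cconj (U a y))) =
     if Nat.eqb x y then C1 else C0.
Proof.
move=> rowsU x y /ltP ltxn /ltP ltyn.
pose A : 'M[R[i]]_n := \matrix_(a < n, j < n) toRi (Cconj (U a j)).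
pose A' : 'M[R[i]]_n := \matrix_(j < n, b < n) toRi (U b j).
have AA' : A *m A' = 1%:M.
  apply/matrixP => a b; rewrite !mxE.
  have := congr1 toRi (rowsU a b (ltP (ltn_ord a)) (ltP (ltn_ord b))).
  rewrite toRi_sum toRi_delta => <-.
  by apply: eq_bigr => j _; rewrite !mxE toRi_mul.
have := congr1 (fun M : 'M[R[i]]_n => M (Ordinal ltxn) (Ordinal ltyn)) (mulmx1C AA').
rewrite /= !mxE => E.
apply: toRi_inj; rewrite toRi_sum toRi_delta -[x == y]/(Ordinal ltxn == Ordinal ltyn) -E.
by apply: eq_bigr => j _; rewrite !mxE toRi_mul.
Qed.

End SquareOrthonormal.

(* Complex arithmetic: two complex numbers are equal when their parts are, so
   every polynomial identity in C reduces to two real ring identities. *)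
Lemma C_ext z w : Cre z = Cre w -> Cim z = Cim w -> z = w.
Proof. destruct z, w; simpl; intros; subst; reflexivity. Qed.

Ltac Csolve := apply C_ext; simpl; ring.

Lemma Cnorm2_nonneg z : 0 <= Cnorm2 z.
Proof. unfold Cnorm2. nra. Qed.

Lemma Cnorm2_zero z : Cnorm2 z = 0 -> z = C0.
Proof. unfold Cnorm2. intros H. apply C_ext; simpl; nra. Qed.

Lemma Cnorm2_conj_mul z : Cnorm2 z = Cre (Cmul (Cconj z) z).
Proof. unfold Cnorm2. simpl. ring. Qed.

Section ListSums.
Context {A : Type}.

Lemma Csum_ext (l : list A) f g : (forall a, In a l -> f a = g a) -> Csum l f = Csum l g.
Proof. induction l; simpl; intros H; auto. rewrite H, IHl; auto. Qed.

Lemma Rsum_ext (l : list A) f g : (forall a, In a l -> f a = g a) -> Rsum l f = Rsum l g.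
Proof. induction l; simpl; intros H; auto. rewrite H, IHl; auto. Qed.

Lemma Cprod_ext (l : list A) f g : (forall a, In a l -> f a = g a) -> Cprod l f = Cprod l g.
Proof. induction l; simpl; intros H; auto. rewrite H, IHl; auto. Qed.

Lemma Csum_add (l : list A) f g :
  Csum l (fun a => Cadd (f a) (g a)) = Cadd (Csum l f) (Csum l g).
Proof. induction l; simpl. Csolve. rewrite IHl. Csolve. Qed.

Lemma Csum_mul_l (l : list A) c f :
  Csum l (fun a => Cmul c (f a)) = Cmul c (Csum l f).
Proof. induction l; simpl. Csolve. rewrite IHl. Csolve. Qed.

Lemma Csum_mul_r (l : list A) c f :
  Csum l (fun a => Cmul (f a) c) = Cmul (Csum l f) c.
Proof. induction l; simpl. Csolve. rewrite IHl. Csolve. Qed.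

Lemma Csum_conj (l : list A) f :
  Cconj (Csum l f) = Csum l (fun a => Cconj (f a)).
Proof. induction l; simpl. Csolve. rewrite <- IHl. Csolve. Qed.

Lemma Csum_app (l1 l2 : list A) f : Csum (l1 ++ l2) f = Cadd (Csum l1 f) (Csum l2 f).
Proof. induction l1; simpl. Csolve. rewrite IHl1. Csolve. Qed.

Lemma Rsum_Cre (l : list A) f : Rsum l (fun a => Cre (f a)) = Cre (Csum l f).
Proof. induction l; simpl; auto. rewrite IHl; auto. Qed.

Lemma Cprod_mul (l : list A) f g :
  Cprod l (fun a => Cmul (f a) (g a)) = Cmul (Cprod l f) (Cprod l g).
Proof. induction l; simpl. Csolve. rewrite IHl. Csolve. Qed.

Lemma Cprod_conj (l : list A) f :
  Cconj (Cprod l f) = Cprod l (fun a => Cconj (f a)).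
Proof. induction l; simpl. Csolve. rewrite <- IHl. Csolve. Qed.

Lemma Cprod_one (l : list A) f : (forall a, In a l -> f a = C1) -> Cprod l f = C1.
Proof. induction l; simpl; intros H; auto. rewrite H, IHl; auto. Csolve. Qed.

Lemma Csum_zero (l : list A) f : (forall a, In a l -> f a = C0) -> Csum l f = C0.
Proof. induction l; simpl; intros H; auto. rewrite H, IHl; auto. Csolve. Qed.

Lemma Cprod_zero (l : list A) f a : In a l -> f a = C0 -> Cprod l f = C0.
Proof.
  induction l as [|b l IH]; simpl; intros Hin H; [contradiction|].
  destruct Hin as [<-|Hin]. rewrite H. Csolve. rewrite IH; auto. Csolve.
Qed.

Lemma Cprod_perm (l1 l2 : list A) f : Permutation l1 l2 -> Cprod l1 f = Cprod l2 f.
Proof. induction 1; simpl; auto; try congruence. Csolve. Qed.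

Lemma Csum_delta (dec : forall x y : A, {x = y} + {x <> y}) (l : list A) g y :
  NoDup l -> In y l ->
  Csum l (fun x => Cmul (g x) (if dec y x then C1 else C0)) = g y.
Proof.
  induction l as [|a l IH]; simpl; intros Hnd Hin; [contradiction|].
  inversion Hnd as [|? ? Hna]; subst.
  destruct (dec y a) as [->|Hne].
  - rewrite (Csum_zero l). Csolve.
    intros x Hx. destruct (dec a x) as [->|_]; [contradiction|]. Csolve.
  - destruct Hin as [->|Hin]; [congruence|]. rewrite IH; auto. Csolve.
Qed.

Lemma NoDup_nth_delta (dec : forall x y : A, {x = y} + {x <> y}) l d a b :
  NoDup l -> (a < length l)%nat -> (b < length l)%nat ->
  (if dec (nth a l d) (nth b l d) then C1 else C0) = (if Nat.eqb a b then C1 else C0).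
Proof.
  intros Hl Ha Hb.
  destruct (dec _ _) as [E|E]; destruct (PeanoNat.Nat.eqb_spec a b) as [->|Hne]; auto.
  - exfalso. apply Hne. eapply NoDup_nth; eauto.
  - congruence.
Qed.

End ListSums.

Section ListReindex.
Context {A B : Type}.

Lemma Csum_map (l : list A) (h : A -> B) f :
  Csum (map h l) f = Csum l (fun a => f (h a)).
Proof. induction l; simpl; auto. rewrite IHl. reflexivity. Qed.

Lemma Rsum_map (l : list A) (h : A -> B) f :
  Rsum (map h l) f = Rsum l (fun a => f (h a)).
Proof. induction l; simpl; auto. rewrite IHl. reflexivity. Qed.

Lemma Cprod_map (l : list A) (h : A -> B) f :
  Cprod (map h l) f = Cprod l (fun a => f (h a)).
Proof. induction l; simpl; auto. rewrite IHl. reflexivity. Qed.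

Lemma Csum_flat_map (l : list A) (g : A -> list B) f :
  Csum (flat_map g l) f = Csum l (fun a => Csum (g a) f).
Proof. induction l; simpl; auto. rewrite Csum_app, IHl. reflexivity. Qed.

Lemma Csum_swap (l1 : list A) (l2 : list B) f :
  Csum l1 (fun a => Csum l2 (f a)) = Csum l2 (fun b => Csum l1 (fun a => f a b)).
Proof.
  induction l1; simpl.
  - induction l2; simpl; auto. rewrite <- IHl2. Csolve.
  - rewrite IHl1. symmetry. apply (Csum_add l2 (f a)).
Qed.

End ListReindex.

Lemma Csum_nth {A} (l : list A) d f :
  Csum l f = Csum (seq 0 (length l)) (fun k => f (nth k l d)).
Proof.
  induction l; simpl; auto. rewrite <- seq_shift, Csum_map, IHl. reflexivity.
Qed.

Lemma Rsum_nth {A} (l : list A) d f :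
  Rsum l f = Rsum (seq 0 (length l)) (fun k => f (nth k l d)).
Proof.
  induction l; simpl; auto. rewrite <- seq_shift, Rsum_map, IHl. reflexivity.
Qed.

Lemma all_idx_spec ds j :
  In j (all_idx ds) <->
  length j = length ds /\ (forall n, (n < length ds)%nat -> (nth n j 0 < nth n ds 0)%nat).
Proof.
  revert j; induction ds as [|a ds IH]; intros j; simpl.
  - split.
    + intros [<-|[]]. split; auto. intros; lia.
    + intros [Hl _]. destruct j; simpl in *; [auto|discriminate].
  - rewrite in_flat_map. split.
    + intros [x [Hx Hj]]. apply in_seq in Hx. apply in_map_iff in Hj.
      destruct Hj as [j' [<- Hj']]. apply IH in Hj'. destruct Hj' as [Hl Hn].
      simpl. split; [lia|]. intros [|n] Hn'; simpl; [lia|]. apply Hn; lia.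
    + intros [Hl Hn]. destruct j as [|x j']; simpl in Hl; [discriminate|].
      exists x. split.
      * apply in_seq. specialize (Hn 0%nat). simpl in Hn. lia.
      * apply in_map. apply IH. split; [lia|]. intros n Hn'.
        specialize (Hn (S n)). simpl in Hn. apply Hn. lia.
Qed.

Lemma NoDup_all_idx ds : NoDup (all_idx ds).
Proof.
  induction ds as [|a ds IH]; simpl.
  - constructor; [intros []|constructor].
  - generalize (seq_NoDup a 0). generalize (seq 0 a). intros l Hl.
    induction l as [|x l IHl]; simpl; [constructor|].
    inversion Hl; subst. apply NoDup_app.
    + apply FinFun.Injective_map_NoDup; auto. intros u v H; inversion H; auto.
    + apply IHl; auto.
    + intros j Hj Hj'. apply in_map_iff in Hj. destruct Hj as [j1 [<- _]].
      apply in_flat_map in Hj'. destruct Hj' as [y [Hy Hj']].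
      apply in_map_iff in Hj'. destruct Hj' as [j2 [E _]]. inversion E; subst. contradiction.
Qed.

Lemma length_all_idx ds : length (all_idx ds) = fold_right mult 1%nat ds.
Proof.
  induction ds as [|a ds IH]; simpl; auto.
  assert (Hconst : forall l : list nat,
    length (flat_map (fun x => map (cons x) (all_idx ds)) l) = (length l * length (all_idx ds))%nat).
  { induction l; simpl; auto. rewrite length_app, length_map, IHl. reflexivity. }
  rewrite Hconst, length_seq, IH. reflexivity.
Qed.

Lemma length_all_idx_perm ds ds' :
  Permutation ds ds' -> length (all_idx ds) = length (all_idx ds').
Proof. rewrite !length_all_idx. induction 1; simpl; lia. Qed.

Lemma Csum_all_idx_prod ds (g : nat -> nat -> C) :
  Csum (all_idx ds) (fun j => Cprod (seq 0 (length ds)) (fun n => g n (nth n j 0%nat))) =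
  Cprod (seq 0 (length ds)) (fun n => Csum (seq 0 (nth n ds 0%nat)) (g n)).
Proof.
  revert g; induction ds as [|a ds IH]; intros g; simpl.
  - Csolve.
  - rewrite Csum_flat_map, <- seq_shift, Cprod_map.
    transitivity (Csum (seq 0 a) (fun x => Cmul (g 0%nat x)
       (Cprod (seq 0 (length ds)) (fun n => Csum (seq 0 (nth n ds 0%nat)) (g (S n)))))).
    + apply Csum_ext. intros x _. rewrite Csum_map, <- (IH (fun n => g (S n))), <- Csum_mul_l.
      apply Csum_ext. intros j _. simpl. rewrite Cprod_map. reflexivity.
    + apply Csum_mul_r.
Qed.

Lemma firstn_all_idx ds i k :
  In i (all_idx ds) -> In (firstn k i) (all_idx (firstn k ds)).
Proof.
  rewrite !all_idx_spec. intros [Hl Hn]. rewrite !length_firstn. split; [lia|].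
  intros n Hn'. rewrite !nth_firstn. destruct (PeanoNat.Nat.ltb_spec n k); [|lia].
  apply Hn. lia.
Qed.

Lemma first_diff (i i' : list nat) :
  length i = length i' -> i <> i' ->
  exists k, (k < length i)%nat /\ firstn k i = firstn k i' /\ nth k i 0%nat <> nth k i' 0%nat.
Proof.
  revert i'; induction i as [|a i IH]; intros [|a' i'] Hl Hne; simpl in *; try discriminate.
  - congruence.
  - destruct (PeanoNat.Nat.eq_dec a a') as [<-|Ha].
    + destruct (IH i') as [k [Hk [Hf Hn]]]; [lia|congruence|].
      exists (S k). simpl. split; [lia|]. split; [congruence|auto].
    + exists 0%nat. simpl. split; [lia|]. split; auto.
Qed.

(* Orderings of the parties.  position n l is the index at which n occurs in
   l; for an ordering perm of {0,...,N-1} it inverts k |-> perm_k, which lets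
   us rewrite a product over measurement steps as a product over parties. *)
Fixpoint position (n : nat) (l : list nat) : nat :=
  match l with
  | [] => 0%nat
  | a :: l' => if Nat.eqb a n then 0%nat else S (position n l')
  end.

Lemma nth_position n l : In n l -> nth (position n l) l 0%nat = n /\ (position n l < length l)%nat.
Proof.
  induction l as [|a l IH]; simpl; intros H; [contradiction|].
  destruct (PeanoNat.Nat.eqb_spec a n). split; auto; lia.
  destruct H as [->|H]; [congruence|]. destruct (IH H). split; auto; lia.
Qed.

Lemma position_nth l k : NoDup l -> (k < length l)%nat -> position (nth k l 0%nat) l = k.
Proof.
  revert k; induction l as [|a l IH]; intros k Hnd Hk; simpl in *; [lia|].
  inversion Hnd; subst. destruct k as [|k].
  - rewrite PeanoNat.Nat.eqb_refl. auto.
  - destruct (PeanoNat.Nat.eqb_spec a (nth k l 0%nat)) as [E|E].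
    + exfalso. match goal with H : ~ In a l |- _ => apply H end. rewrite E. apply nth_In. lia.
    + rewrite IH; auto. lia.
Qed.

Lemma map_nth_seq (l : list nat) : map (fun n => nth n l 0%nat) (seq 0 (length l)) = l.
Proof.
  induction l; simpl; auto. f_equal. rewrite <- seq_shift, map_map. exact IHl.
Qed.

Section Ordering.
Variables (N : nat) (perm : list nat).
Hypothesis Hperm : Permutation perm (seq 0 N).

Lemma perm_length : length perm = N.
Proof. rewrite (Permutation_length Hperm). apply length_seq. Qed.

Lemma perm_In n : In n perm <-> (n < N)%nat.
Proof.
  split; intros H.
  - apply (Permutation_in _ Hperm) in H. apply in_seq in H. lia.
  - apply (Permutation_in _ (Permutation_sym Hperm)). apply in_seq. lia.
Qed.

Lemma position_lt n : (n < N)%nat -> (position n perm < N)%nat.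
Proof. intros H. apply perm_In in H. rewrite <- perm_length. apply nth_position; auto. Qed.

Lemma nth_position_perm n : (n < N)%nat -> nth (position n perm) perm 0%nat = n.
Proof. intros H. apply perm_In in H. apply nth_position; auto. Qed.

Lemma position_nth_perm k : (k < N)%nat -> position (nth k perm 0%nat) perm = k.
Proof.
  intros. apply position_nth; [|rewrite perm_length; auto].
  apply (Permutation_NoDup (Permutation_sym Hperm)), seq_NoDup.
Qed.

Lemma Cprod_steps_to_parties (F : nat -> nat -> C) :
  Cprod (seq 0 N) (fun k => F k (nth k perm 0%nat)) =
  Cprod (seq 0 N) (fun n => F (position n perm) n).
Proof.
  transitivity (Cprod (seq 0 N) (fun k => (fun n => F (position n perm) n) (nth k perm 0%nat))).
  - apply Cprod_ext. intros k Hk. apply in_seq in Hk. rewrite position_nth_perm; auto. lia.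
  - rewrite <- (Cprod_map (seq 0 N) (fun k => nth k perm 0%nat) (fun n => F (position n perm) n)).
    rewrite <- perm_length at 1. rewrite map_nth_seq.
    apply Cprod_perm. auto.
Qed.

End Ordering.

Definition orthonormal (ds : list nat) (K : list (list nat)) (u : list nat -> gvec) : Prop :=
  forall k k', In k K -> In k' K ->
    ginner ds (u k) (u k') = if list_eq_dec PeanoNat.Nat.eq_dec k k' then C1 else C0.

Lemma orthonormal_complete ds K u :
  NoDup K -> length K = length (all_idx ds) -> orthonormal ds K u ->
  forall x y, In x (all_idx ds) -> In y (all_idx ds) ->
    Csum K (fun k => Cmul (u k x) (Cconj (u k y))) =
    if list_eq_dec PeanoNat.Nat.eq_dec x y then C1 else C0.
Proof.
  intros HK HL Hon x y Hx Hy.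
  set (X := all_idx ds) in *.
  destruct (In_nth _ _ [] Hx) as [a [Ha <-]].
  destruct (In_nth _ _ [] Hy) as [b [Hb <-]].
  rewrite NoDup_nth_delta by (auto; apply NoDup_all_idx).
  rewrite (Csum_nth K []), HL.
  apply (SquareOrthonormal.square_orthonormal_complete (length X)
           (fun k x => u (nth k K []) (nth x X []))); auto.
  intros k k' Hk Hk'. rewrite <- HL in Hk, Hk'.
  rewrite <- (NoDup_nth_delta (list_eq_dec PeanoNat.Nat.eq_dec) K []) by auto.
  rewrite <- Hon by (apply nth_In; auto).
  unfold ginner. fold X. rewrite (Csum_nth X []). reflexivity.
Qed.

Lemma parseval ds K u psi :
  NoDup K -> length K = length (all_idx ds) -> orthonormal ds K u ->
  Rsum K (fun k => Cnorm2 (ginner ds (u k) psi)) = Cre (ginner ds psi psi).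
Proof.
  intros HK HL Hon.
  pose proof (orthonormal_complete ds K u HK HL Hon) as Hcomplete.
  set (X := all_idx ds).
  rewrite (Rsum_ext _ _ _ (fun k _ => Cnorm2_conj_mul (ginner ds (u k) psi))), Rsum_Cre.
  f_equal. unfold ginner. fold X.
  transitivity (Csum K (fun k => Csum X (fun y => Csum X (fun x =>
     Cmul (Cmul (Cconj (psi y)) (psi x)) (Cmul (u k y) (Cconj (u k x))))))).
  { apply Csum_ext. intros k _. rewrite Csum_conj, <- Csum_mul_r.
    apply Csum_ext. intros y _. rewrite <- Csum_mul_l. apply Csum_ext. intros x _. Csolve. }
  rewrite Csum_swap. apply Csum_ext. intros y Hy. rewrite Csum_swap.
  transitivity (Csum X (fun x => Cmul (Cmul (Cconj (psi y)) (psi x))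
     (if list_eq_dec PeanoNat.Nat.eq_dec y x then C1 else C0))).
  { apply Csum_ext. intros x Hx. rewrite <- Hcomplete by auto. apply Csum_mul_l. }
  apply (Csum_delta _ X (fun x => Cmul (Cconj (psi y)) (psi x))); auto.
  apply NoDup_all_idx.
Qed.

(* A unit vector b of C^d defines the pure state |b><b|, a density matrix:
   it is Hermitian, <v|b><b|v> = |<b|v>|^2 >= 0, and its trace is <b|b> = 1. *)
Lemma pure_state_density d b :
  linner d b b = C1 -> ldensity d (fun x y => Cmul (b x) (Cconj (b y))).
Proof.
  intros Hb. split; [|split].
  - intros x y _ _. Csolve.
  - intros v.
    assert (Hexp : linner d v (fun x => Csum (seq 0 d) (fun y => Cmul (Cmul (b x) (Cconj (b y))) (v y)))
                   = Cmul (Cconj (linner d b v)) (linner d b v)).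
    { unfold linner at 1.
      transitivity (Csum (seq 0 d) (fun x => Cmul (Cmul (Cconj (v x)) (b x)) (linner d b v))).
      - apply Csum_ext. intros x _. unfold linner. rewrite <- !Csum_mul_l.
        apply Csum_ext. intros y _. Csolve.
      - rewrite Csum_mul_r. f_equal. unfold linner. rewrite Csum_conj.
        apply Csum_ext. intros x _. Csolve. }
    rewrite Hexp, <- Cnorm2_conj_mul. apply Cnorm2_nonneg.
  - rewrite <- Hb. unfold linner. apply Csum_ext. intros x _. Csolve.
Qed.

Section Scheme.
Variables (ds perm : list nat) (B : list nat -> nat -> nat -> C).
Hypothesis Hs : is_scheme ds perm B.

Let Hperm : Permutation perm (seq 0 (length ds)) := proj1 Hs.

Definition step_vec (i : list nat) (k : nat) : nat -> C := B (firstn k i) (nth k i 0%nat).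

Lemma dims_length : length (dims_in_order ds perm) = length ds.
Proof. unfold dims_in_order. rewrite length_map. apply (perm_length _ _ Hperm). Qed.

Lemma nth_dims k : (k < length ds)%nat ->
  nth k (dims_in_order ds perm) 0%nat = nth (nth k perm 0%nat) ds 0%nat.
Proof.
  intros Hk. unfold dims_in_order.
  rewrite (nth_indep _ 0%nat ((fun n => nth n ds 0%nat) 0%nat)).
  - exact (map_nth (fun n => nth n ds 0%nat) perm 0%nat k).
  - rewrite length_map, (perm_length _ _ Hperm). auto.
Qed.

Lemma length_outcomes : length (outcomes ds perm) = length (all_idx ds).
Proof.
  apply length_all_idx_perm. unfold dims_in_order.
  transitivity (map (fun n => nth n ds 0%nat) (seq 0 (length ds))).
  - apply Permutation_map. exact Hperm.
  - rewrite map_nth_seq. reflexivity.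
Qed.

Lemma outcome_bound i : In i (outcomes ds perm) ->
  length i = length ds /\
  forall k, (k < length ds)%nat -> (nth k i 0%nat < nth k (dims_in_order ds perm) 0%nat)%nat.
Proof. unfold outcomes. rewrite all_idx_spec, dims_length. auto. Qed.

Lemma step_vec_inner i i' k :
  In i (outcomes ds perm) -> In i' (outcomes ds perm) -> (k < length ds)%nat ->
  firstn k i = firstn k i' ->
  linner (nth k (dims_in_order ds perm) 0%nat) (step_vec i k) (step_vec i' k) =
  if Nat.eqb (nth k i 0%nat) (nth k i' 0%nat) then C1 else C0.
Proof.
  intros Hi Hi' Hk Hhist. unfold step_vec. rewrite <- Hhist.
  apply (proj2 Hs); [auto|apply firstn_all_idx; exact Hi|apply outcome_bound; auto..].
Qed.

Lemma outcome_inner i i' :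
  ginner ds (outcome_vec ds perm B i) (outcome_vec ds perm B i') =
  Cprod (seq 0 (length ds)) (fun k =>
    linner (nth k (dims_in_order ds perm) 0%nat) (step_vec i k) (step_vec i' k)).
Proof.
  set (g := fun k x => Cmul (Cconj (step_vec i k x)) (step_vec i' k x)).
  unfold ginner, outcome_vec.
  transitivity (Csum (all_idx ds) (fun j => Cprod (seq 0 (length ds))
        (fun n => g (position n perm) (nth n j 0%nat)))).
  { apply Csum_ext. intros j _. rewrite Cprod_conj, <- Cprod_mul.
    exact (Cprod_steps_to_parties _ _ Hperm (fun k n => g k (nth n j 0%nat))). }
  rewrite (Csum_all_idx_prod ds (fun n => g (position n perm))).
  rewrite <- (Cprod_steps_to_parties _ _ Hperm (fun k n => Csum (seq 0 (nth n ds 0%nat)) (g k))).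
  apply Cprod_ext. intros k Hk. apply in_seq in Hk.
  unfold linner. rewrite nth_dims by lia. reflexivity.
Qed.

(* The outcome vectors form an orthonormal family: at the first step where
   two outcome strings differ, the histories agree, so the two local vectors
   are distinct members of one orthonormal basis. *)
Lemma outcome_orthonormal : orthonormal ds (outcomes ds perm) (outcome_vec ds perm B).
Proof.
  intros i i' Hi Hi'. rewrite outcome_inner.
  destruct (outcome_bound _ Hi) as [Hl _]. destruct (outcome_bound _ Hi') as [Hl' _].
  destruct (list_eq_dec PeanoNat.Nat.eq_dec i i') as [<-|Hne].
  - apply Cprod_one. intros k Hk. apply in_seq in Hk.
    rewrite step_vec_inner, PeanoNat.Nat.eqb_refl by (auto; lia). reflexivity.
  - destruct (first_diff i i') as [k [Hk [Hhist Hdiff]]]; [congruence|auto|].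
    apply (Cprod_zero _ _ k); [apply in_seq; lia|].
    rewrite step_vec_inner by (auto; lia).
    apply PeanoNat.Nat.eqb_neq in Hdiff. rewrite Hdiff. reflexivity.
Qed.

Lemma prob_sum psi : unit_vec ds psi -> Rsum (outcomes ds perm) (prob ds perm B psi) = 1.
Proof.
  intros Hpsi. unfold prob.
  rewrite parseval, Hpsi; [reflexivity|apply NoDup_all_idx|apply length_outcomes|].
  apply outcome_orthonormal.
Qed.

Lemma outcome_projector_product i j j' :
  Cmul (outcome_vec ds perm B i j) (Cconj (outcome_vec ds perm B i j')) =
  Cprod (seq 0 (length ds)) (fun n =>
    Cmul (step_vec i (position n perm) (nth n j 0%nat))
         (Cconj (step_vec i (position n perm) (nth n j' 0%nat)))).
Proof.
  unfold outcome_vec. rewrite Cprod_conj, <- Cprod_mul.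
  exact (Cprod_steps_to_parties _ _ Hperm (fun k n =>
    Cmul (step_vec i k (nth n j 0%nat)) (Cconj (step_vec i k (nth n j' 0%nat))))).
Qed.

Lemma omega_fully_separable psi :
  unit_vec ds psi -> fully_separable ds (omega ds perm B psi).
Proof.
  intros Hpsi.
  set (O := outcomes ds perm).
  exists (length O), (fun j => prob ds perm B psi (nth j O [])),
    (fun j n x y => Cmul (step_vec (nth j O []) (position n perm) x)
                         (Cconj (step_vec (nth j O []) (position n perm) y))).
  split; [|split; [|split]].
  - intros; apply Cnorm2_nonneg.
  - rewrite <- (Rsum_nth O [] (prob ds perm B psi)). apply prob_sum; auto.
  - intros j n Hj Hn. apply pure_state_density.
    assert (Hi : In (nth j O []) O) by (apply nth_In; auto).
    assert (Hk : (position n perm < length ds)%nat) by (apply (position_lt _ _ Hperm); auto).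
    assert (Hd : nth n ds 0%nat = nth (position n perm) (dims_in_order ds perm) 0%nat).
    { rewrite nth_dims, (nth_position_perm _ _ Hperm) by auto. reflexivity. }
    rewrite Hd, step_vec_inner, PeanoNat.Nat.eqb_refl by auto. reflexivity.
  - intros j j' _ _. unfold omega. fold O. rewrite (Csum_nth O []).
    apply Csum_ext. intros k _. f_equal. apply outcome_projector_product.
Qed.

(* omega = sum_i p_i |e_i><e_i| is a spectral decomposition in the
   orthonormal basis (e_i), and psi lies in the support since
   p_i = |<e_i|psi>|^2; so -<psi|log2 omega|psi> = - sum_i p_i log2 p_i. *)
Lemma omega_neg_log_expect psi :
  neg_log_expect ds (omega ds perm B psi) psi (entropy (outcomes ds perm) (prob ds perm B psi)).
Proof.
  exists (outcomes ds perm), (outcome_vec ds perm B), (prob ds perm B psi).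
  split; [apply NoDup_all_idx|].
  split; [apply length_outcomes|].
  split; [apply outcome_orthonormal|].
  split; [intros; apply Cnorm2_nonneg|].
  split; [reflexivity|].
  split; [intros k _ Hp0; apply Cnorm2_zero; exact Hp0|].
  reflexivity.
Qed.

End Scheme.

Theorem mainTheorem3 (ds : list nat) (psi : gvec) (Hpsi : unit_vec ds psi) :
  (forall emb er : R,
     is_min (EMB_value ds psi) emb -> is_min (ER_value ds psi) er -> er <= emb) /\
  (forall (perm : list nat) (B : list nat -> nat -> nat -> C),
     is_scheme ds perm B ->
     fully_separable ds (omega ds perm B psi) /\
     neg_log_expect ds (omega ds perm B psi) psi
       (entropy (outcomes ds perm) (prob ds perm B psi))).
Proof.
  assert (Homega : forall (perm : list nat) (B : list nat -> nat -> nat -> C),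
     is_scheme ds perm B ->
     fully_separable ds (omega ds perm B psi) /\
     neg_log_expect ds (omega ds perm B psi) psi
       (entropy (outcomes ds perm) (prob ds perm B psi))).
  { intros perm B Hs. split.
    - apply omega_fully_separable; auto.
    - apply omega_neg_log_expect; auto. }
  split; [|exact Homega].
  intros emb er [[perm [B [Hs Hemb]]] _] [_ Hmin].
  apply Hmin. exists (omega ds perm B psi). rewrite Hemb. apply Homega; auto.
Qed.
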